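(* Let $K$ be a totally real number field, $A$ a totally definite quaternion algebra over $K$, $\Lambda$ a maximal order of $A$, and let $\ell=\ell_1^2\ell_2$ where $\ell_1,\ell_2$ are positive integers and $\ell_2$ is square-free. If there exists an Arakelov-modular lattice of level $\ell_2$ over $\Lambda$, then there exists an Arakelov-modular lattice of level $\ell$ over $\Lambda$.
   Context: $A=\left(\frac{a,b}{K}\right)$ has $K$-basis $1,i,j,ij$, $i^2=a$, $j^2=b$, $ij=-ji$; conjugation $\overline{x_0+x_1i+x_2j+x_3ij}=x_0-x_1i-x_2j-x_3ij$; $\mathrm{tr}_{A/K}(x)=x+\bar x$; totally definite means $A\otimes_{K,\sigma}\mathbb{R}$ is the Hamilton quaternions for every real embedding $\sigma$. Ideals of $A$: finitely generated $\mathcal{O}_K$-submodules $I$ with $KI=A$; orders: ideals that are subrings with 1; maximal orders: maximal under inclusion. $\mathcal{LR}(\Lambda)$: ideals $J$ with $\{x:xJ\subseteq J\}=\{x:Jx\subseteq J\}=\Lambda$. $N(\Lambda)=\{x\in A^\times:x\Lambda x^{-1}=\Lambda\}$. For totally positive $\alpha\in K^\times$, $q_\alpha(x,y)=\mathrm{Tr}_{K/\mathbb{Q}}(\mathrm{tr}_{A/K}(\alpha x\bar y))$ extended to $A\otimes_{\mathbb{Q}}\mathbb{R}$. An ideal lattice over $\Lambda$ is $(I,q_\alpha)$ with $I=Jt$, $J\in\mathcal{LR}(\Lambda)$, $t\in A^\times$; dual $I^*=\{x\in A\otimes\mathbb{R}:q_\alpha(x,y)\in\mathbb{Z}\ \forall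 y\in I\}$. For a positive integer $m$, $(I,q_\alpha)$ is Arakelov-modular of level $m$ if there exist $J\in\mathcal{LR}(\Lambda)$, $t\in A^\times$ with $I=Jt$ and $\beta\in N(\Lambda)\cap\Lambda$ with $m=\beta\bar\beta$ and $I=I^*\bar t\beta\bar t^{-1}$. *)

From HB Require Import structures.
From mathcomp Require Import all_boot all_order all_algebra all_field.
From mathcomp Require Import algC.
From mathcomp Require Import reals Rstruct.
From Stdlib Require Rdefinitions.
Notation R := Rdefinitions.R.
Set Implicit Arguments. Unset Strict Implicit. Unset Printing Implicit Defensive.
Import Order.TTheory GRing.Theory Num.Theory.
Local Open Scope ring_scope.

(* ---------- quaternion algebras (a,b / F): elements x0 + x1 i + x2 j + x3 ij *)
Record quat (F : Type) := Quat { q0 : F; q1 : F; q2 : F; q3 : F }.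

Section QuatOps.
Variable F : comNzRingType.
Implicit Types (a b c : F) (x y : quat F).

Definition qzero : quat F := Quat 0 0 0 0.
Definition qone : quat F := Quat 1 0 0 0.
Definition qadd x y : quat F :=
  Quat (q0 x + q0 y) (q1 x + q1 y) (q2 x + q2 y) (q3 x + q3 y).
Definition qscale c x : quat F := Quat (c * q0 x) (c * q1 x) (c * q2 x) (c * q3 x).
(* multiplication in (a,b/F): i^2 = a, j^2 = b, ij = -ji *)
Definition qmul a b x y : quat F :=
  Quat (q0 x * q0 y + a * q1 x * q1 y + b * q2 x * q2 y - a * b * q3 x * q3 y)
       (q0 x * q1 y + q1 x * q0 y - b * q2 x * q3 y + b * q3 x * q2 y)
       (q0 x * q2 y + q2 x * q0 y + a * q1 x * q3 y - a * q3 x * q1 y)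
       (q0 x * q3 y + q3 x * q0 y + q1 x * q2 y - q2 x * q1 y).
Definition qconj x : quat F := Quat (q0 x) (- q1 x) (- q2 x) (- q3 x).
Definition qtr x : F := q0 (qadd x (qconj x)).
Definition qcomp (m : 'I_4) x : F :=
  match val m with 0 => q0 x | 1 => q1 x | 2 => q2 x | _ => q3 x end.
Definition qbasis (m : 'I_4) c : quat F :=
  Quat (if val m == 0%N then c else 0) (if val m == 1%N then c else 0)
       (if val m == 2%N then c else 0) (if val m == 3%N then c else 0).
Definition qunit a b x := exists y, qmul a b x y = qone /\ qmul a b y x = qone.
End QuatOps.

Definition qinv (F : fieldType) (a b : F) (x : quat F) : quat F :=
  qscale (q0 (qmul a b x (qconj x)))^-1 (qconj x).

Definition quat_alg_iso (F : comNzRingType) (a b a' b' : F) :=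
  exists f : quat F -> quat F,
    bijective f /\
    (forall x y, f (qadd x y) = qadd (f x) (f y)) /\
    (forall c x, f (qscale c x) = qscale c (f x)) /\
    (forall x y, f (qmul a b x y) = qmul a' b' (f x) (f y)) /\
    f (qone F) = qone F.

Section NumberField.
Variable K : fieldExtType rat.

Definition totally_real :=
  forall (s : {rmorphism K -> algC}) (x : K), s x \is Num.real.

Definition totally_positive (alpha : K) :=
  alpha != 0 /\ forall s : {rmorphism K -> R}, 0 < s alpha.

(* (a,b/K) is totally definite: for every real embedding s,
   A (x)_{K,s} R = (s a, s b / R) is (isomorphic to) Hamilton's quaternions *)
Definition totally_definite (a b : K) :=
  forall s : {rmorphism K -> R}, quat_alg_iso (s a) (s b) (-1) (-1).

Definition integral (x : K) :=
  exists p : {poly int}, p \is monic /\ root (map_poly (fun z : int => z%:~R) p) x.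

Definition dK := \dim (fullv : {vspace K}).
Definition bK (k : 'I_dK) : K := tnth (vbasis fullv) k.
Definition coordK (k : 'I_dK) (x : K) : rat := coord (vbasis fullv) k x.

(* Tr_{K/Q}: trace of the Q-linear map y |-> x y *)
Definition TrKQ (x : K) : rat := \sum_(k < dK) coordK k (x * bK k).

Section QuatK.
Variables a b : K.
Local Notation A := (quat K).
Local Notation "x * y" := (qmul a b x y) : quat_scope.
Declare Scope quat_scope.
Delimit Scope quat_scope with q.

Definition qsub (P Q : A -> Prop) := forall x, P x -> Q x.
Definition qseteq (P Q : A -> Prop) := forall x, P x <-> Q x.

Definition ideal (I : A -> Prop) :=
  (exists gs : seq A, forall x, I x <->
      exists cs : 'I_(size gs) -> K, (forall i, integral (cs i)) /\
        x = \big[@qadd K/qzero K]_(i < size gs) qscale (cs i) (nth (qzero K) gs i)) /\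
  (forall x, exists (n : nat) (ys : 'I_n -> A) (ks : 'I_n -> K),
      (forall i, I (ys i)) /\ x = \big[@qadd K/qzero K]_(i < n) qscale (ks i) (ys i)).

Definition order (L : A -> Prop) :=
  ideal L /\ L (qone K) /\ forall x y, L x -> L y -> L (x * y)%q.
Definition maximal_order (L : A -> Prop) :=
  order L /\ forall L', order L' -> qsub L L' -> qsub L' L.

Definition LR (L J : A -> Prop) :=
  ideal J /\
  (forall x, (forall y, J y -> J (x * y)%q) <-> L x) /\
  (forall x, (forall y, J y -> J (y * x)%q) <-> L x).

Definition normalizer (L : A -> Prop) (x : A) :=
  qunit a b x /\ qseteq (fun z => exists y, L y /\ z = (x * y * qinv a b x)%q) L.

Definition qform (alpha : K) (x y : A) : rat :=
  TrKQ (qtr (qmul a b (qscale alpha x) (qconj y))).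

(* A (x)_Q R, represented by real coordinates w.r.t. the Q-basis
   (bK k) * (1,i,j,ij)_m of A *)
Definition AR := 'M[R]_(4, dK).
Definition eA (m : 'I_4) (k : 'I_dK) : A := qbasis m (bK k).
Definition toAR (x : A) : AR := \matrix_(m < 4, k < dK) ratr (coordK k (qcomp m x)).
(* R-bilinear extension of q_alpha, evaluated on (A (x) R) x A *)
Definition qformR (alpha : K) (x : AR) (y : A) : R :=
  \sum_(m < 4) \sum_(k < dK) x m k * ratr (qform alpha (eA m k) y).
(* R-linear extension of right multiplication by g in A *)
Definition mulAR (x : AR) (g : A) : AR :=
  \matrix_(m < 4, k < dK)
    \sum_(m' < 4) \sum_(k' < dK) x m' k' * ratr (coordK k (qcomp m (eA m' k' * g)%q)).

Definition dual (alpha : K) (I : A -> Prop) (x : AR) :=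
  forall y, I y -> exists z : int, qformR alpha x y = z%:~R.

Definition ideal_lattice (L : A -> Prop) (I : A -> Prop) (alpha : K) :=
  totally_positive alpha /\
  exists (J : A -> Prop) (t : A), LR L J /\ qunit a b t /\
    qseteq I (fun z => exists y, J y /\ z = (y * t)%q).

Definition arakelov_modular (L : A -> Prop) (I : A -> Prop) (alpha : K) (m : nat) :=
  ideal_lattice L I alpha /\
  exists (J : A -> Prop) (t : A) (beta : A),
    LR L J /\ qunit a b t /\
    qseteq I (fun z => exists y, J y /\ z = (y * t)%q) /\
    normalizer L beta /\ L beta /\
    (beta * qconj beta)%q = qscale (m%:R : K) (qone K) /\
    (forall x : AR, (exists y, I y /\ x = toAR y) <->
       (exists w, dual alpha I w /\
          x = mulAR w (qconj t * beta * qinv a b (qconj t))%q)).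

End QuatK.
End NumberField.

Definition squarefree (n : nat) := forall p, prime p -> ~~ (p * p %| n)%N.

(* Scaling the form by a positive integer n rescales the dual lattice by 1/n, while scaling
   beta by n multiplies beta * conj beta by n^2 and the modularity map by n; the two factors
   cancel, so an Arakelov-modular lattice of level m stays Arakelov-modular, now of level n^2 m.
   Taking n = l1 gives the theorem. *)
From HB Require Import structures.
From mathcomp Require Import all_boot all_order all_algebra all_field.
From mathcomp Require Import reals Rstruct.
From mathcomp Require Import ring.
Import GRing.Theory Num.Theory.
Local Open Scope ring_scope.

(* If p is a monic integer polynomial with p(z) = 0, then n^deg(p) p(X/n) is monic with root n z. *)
Lemma integral_natrM (K : fieldExtType rat) (n : nat) (z : K) :
  integral z -> integral (n%:R * z).
Proof.
move=> [p [mp rp]].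
have lp : lead_coef p = 1 by apply/eqP.
have sp : (0 < size p)%N by rewrite size_poly_gt0 monic_neq0.
pose d := (size p).-1.
pose q : {poly int} := \poly_(i < size p) (p`_i * (n%:Z) ^+ (d - i)).
have lead_p_ne0 : p`_d * n%:Z ^+ (d - d) != 0.
  by rewrite subnn expr0 mulr1; apply: contra_neq (oner_neq0 int) => <-; rewrite -lp.
have lq : lead_coef q = 1 by rewrite lead_coef_poly // subnn expr0 mulr1.
have sq : size q = size p by rewrite size_poly_eq.
exists q; split; first by rewrite monicE lq.
have mq : (lead_coef q)%:~R != 0 :> K by rewrite lq oner_neq0.
have mp' : (lead_coef p)%:~R != 0 :> K by rewrite lp oner_neq0.
move: rp; rewrite /root !horner_coef (size_map_poly_id0 mq) (size_map_poly_id0 mp') sq.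
move=> /eqP rp; apply/eqP.
transitivity ((n%:R : K) ^+ d *
  \sum_(i < size p) (map_poly (fun z : int => z%:~R : K) p)`_i * z ^+ i); last first.
  by rewrite rp mulr0.
rewrite mulr_sumr; apply: eq_bigr => i _.
rewrite !coef_map /= coef_poly ltn_ord rmorphM rmorphXn /= exprMn.
have le_id : (i <= d)%N by rewrite /d -ltnS prednK.
by rewrite -{2}(subnK le_id) exprD; ring.
Qed.

Section QuatScale.
Variable F : comNzRingType.
Implicit Types (a b c d : F) (x y : quat F).

Lemma qscale_add c x y : qscale c (qadd x y) = qadd (qscale c x) (qscale c y).
Proof. by case: x y => ? ? ? ? [? ? ? ?]; rewrite /qscale /qadd /=; f_equal; ring. Qed.

Lemma qscale0 c : qscale c (qzero F) = qzero F.
Proof. by rewrite /qscale /qzero /= !mulr0. Qed.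

Lemma qscaleA c d x : qscale c (qscale d x) = qscale (c * d) x.
Proof. by case: x => ? ? ? ?; rewrite /qscale /=; f_equal; ring. Qed.

Lemma qscale1 x : qscale 1 x = x.
Proof. by case: x => ? ? ? ?; rewrite /qscale /= !mul1r. Qed.

Lemma qscale_sum c n (f : 'I_n -> quat F) :
  qscale c (\big[@qadd F/qzero F]_(i < n) f i) =
  \big[@qadd F/qzero F]_(i < n) qscale c (f i).
Proof. exact: (big_morph (qscale c) (qscale_add c) (qscale0 c)). Qed.

Lemma qmul_scalel a b c x y : qmul a b (qscale c x) y = qscale c (qmul a b x y).
Proof. by case: x y => ? ? ? ? [? ? ? ?]; rewrite /qscale /qmul /=; f_equal; ring. Qed.

Lemma qmul_scaler a b c x y : qmul a b x (qscale c y) = qscale c (qmul a b x y).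
Proof. by case: x y => ? ? ? ? [? ? ? ?]; rewrite /qscale /qmul /=; f_equal; ring. Qed.

Lemma qconj_scale c x : qconj (qscale c x) = qscale c (qconj x).
Proof. by case: x => ? ? ? ?; rewrite /qscale /qconj /=; f_equal; ring. Qed.

Lemma qtr_scale c x : qtr (qscale c x) = c * qtr x.
Proof. by case: x => ? ? ? ?; rewrite /qtr /qscale /qadd /qconj /=; ring. Qed.

Lemma qcomp_scale m c x : qcomp m (qscale c x) = c * qcomp m x.
Proof. by rewrite /qcomp; case: (val m) => [|[|[|?]]]. Qed.

End QuatScale.

Section QuatScaleField.
Variables (F : fieldType) (a b c : F).
Hypothesis c_neq0 : c != 0.

Lemma qunit_scale x : qunit a b x -> qunit a b (qscale c x).
Proof.
case=> y [xy yx]; exists (qscale c^-1 y).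
by rewrite qmul_scalel qmul_scaler qscaleA mulfV // xy qscale1
  qmul_scalel qmul_scaler qscaleA mulVf // yx qscale1.
Qed.

Lemma qconjugation_scale x y :
  qmul a b (qmul a b (qscale c x) y) (qinv a b (qscale c x)) =
  qmul a b (qmul a b x y) (qinv a b x).
Proof.
rewrite /qinv.
have -> : q0 (qmul a b (qscale c x) (qconj (qscale c x))) =
          c * c * q0 (qmul a b x (qconj x)).
  by case: x => ? ? ? ?; rewrite /qmul /qscale /qconj /=; ring.
rewrite invfM; move: (q0 (qmul a b x (qconj x)))^-1 => u.
by case: x y => ? ? ? ? [? ? ? ?]; rewrite /qmul /qscale /qconj /=; f_equal; field.
Qed.

End QuatScaleField.

Section ArakelovScale.
Variables (K : fieldExtType rat) (a b : K).
Implicit Types (alpha : K) (n : nat) (w : AR K).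

Lemma natr_neq0 n : (0 < n)%N -> n%:R != 0 :> K.
Proof. by move=> n_gt0; rewrite -scaler_nat scaler_eq0 negb_or oner_neq0 andbT pnatr_eq0 -lt0n. Qed.

Lemma coordK_natrM k n (z : K) : coordK k (n%:R * z) = coordK k z *+ n.
Proof. by rewrite /coordK mulr_natl raddfMn. Qed.

Lemma TrKQ_natrM n (z : K) : TrKQ (n%:R * z) = TrKQ z *+ n.
Proof. by rewrite /TrKQ -sumrMnl; apply: eq_bigr => k _; rewrite -mulrA coordK_natrM. Qed.

Lemma qform_natrM n alpha x y : qform a b (n%:R * alpha) x y = qform a b alpha x y *+ n.
Proof. by rewrite /qform -qscaleA qmul_scalel qtr_scale TrKQ_natrM. Qed.

Lemma qformR_natrM n alpha w y :
  qformR a b (n%:R * alpha) w y = qformR a b alpha ((n%:R : R) *: w) y.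
Proof.
rewrite /qformR; apply: eq_bigr => m _; apply: eq_bigr => k _.
by rewrite qform_natrM rmorphMn mxE -mulr_natr -mulr_natl; ring.
Qed.

Lemma mulAR_natr_scale n w g :
  mulAR a b w (qscale n%:R g) = mulAR a b ((n%:R : R) *: w) g.
Proof.
apply/matrixP => m k; rewrite !mxE; apply: eq_bigr => m' _; apply: eq_bigr => k' _.
by rewrite qmul_scaler qcomp_scale coordK_natrM rmorphMn mxE -mulr_natr -mulr_natl; ring.
Qed.

Lemma dual_natrM n alpha I w :
  dual a b (n%:R * alpha) I w <-> dual a b alpha I ((n%:R : R) *: w).
Proof. by split=> Dw y Iy; [rewrite -qformR_natrM | rewrite qformR_natrM]; exact: Dw. Qed.

Lemma totally_positive_natrM n alpha :
  (0 < n)%N -> totally_positive alpha -> totally_positive (n%:R * alpha).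
Proof.
move=> n_gt0 [alpha_neq0 alpha_pos]; split.
  by rewrite mulf_neq0 // natr_neq0.
by move=> s; rewrite rmorphM rmorph_nat mulr_gt0 // ltr0n.
Qed.

Lemma ideal_natr_scale n (L : quat K -> Prop) x : ideal L -> L x -> L (qscale n%:R x).
Proof.
case=> -[gs gsP] _ /gsP [cs [cs_int ->]]; apply/gsP.
exists (fun i => n%:R * cs i); split; first by move=> i; exact: integral_natrM.
by rewrite qscale_sum; apply: eq_bigr => i _; rewrite qscaleA.
Qed.

Lemma normalizer_scale c L x :
  c != 0 -> normalizer a b L x -> normalizer a b L (qscale c x).
Proof.
move=> c_neq0 [x_unit xLx]; split; first exact: qunit_scale.
by move=> z; rewrite -(xLx z); split; case=> y [Ly ->]; exists y; rewrite qconjugation_scale.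
Qed.

Lemma arakelov_modular_natr_scale n (L : quat K -> Prop) I alpha m :
  (0 < n)%N -> ideal L -> arakelov_modular a b L I alpha m ->
  arakelov_modular a b L I (n%:R * alpha) (n ^ 2 * m)%N.
Proof.
move=> n_gt0 L_ideal [[alpha_pos IL]
  [J [t [beta [JL [t_unit [IJt [beta_norm [L_beta [beta_norm_eq I_self_dual]]]]]]]]]].
have c_neq0 : n%:R != 0 :> K by exact: natr_neq0.
have r_neq0 : n%:R != 0 :> R by rewrite pnatr_eq0 -lt0n.
split; first by split; first exact: totally_positive_natrM.
exists J, t, (qscale n%:R beta); do 3 split => //.
split; first exact: normalizer_scale.
split; first exact: ideal_natr_scale.
split.
  rewrite qmul_scalel qconj_scale qmul_scaler qscaleA beta_norm_eq qscaleA.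
  by rewrite natrM natrX expr2.
move=> x; rewrite I_self_dual qmul_scaler qmul_scalel.
split; case=> w [Dw ->].
  have wK : (n%:R : R) *: ((n%:R : R)^-1 *: w) = w by rewrite scalerA mulfV ?scale1r.
  exists ((n%:R : R)^-1 *: w); rewrite mulAR_natr_scale wK.
  by split; first by apply/(dual_natrM n alpha I); rewrite wK.
exists ((n%:R : R) *: w); rewrite mulAR_natr_scale.
by split; first exact: (dual_natrM n alpha I w).1.
Qed.

End ArakelovScale.

Theorem mainTheorem10 (K : fieldExtType rat) (a b : K) (Lam : quat K -> Prop)
    (l1 l2 : nat) :
  totally_real K -> a != 0 -> b != 0 -> totally_definite a b ->
  maximal_order a b Lam ->
  (0 < l1)%N -> (0 < l2)%N -> squarefree l2 ->
  (exists (I : quat K -> Prop) (alpha : K), arakelov_modular a b Lam I alpha l2) ->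
  exists (I : quat K -> Prop) (alpha : K),
    arakelov_modular a b Lam I alpha (l1 ^ 2 * l2)%N.
Proof.
move=> _ _ _ _ [[Lam_ideal _] _] l1_gt0 _ _ [I [alpha Imod]].
by exists I, (l1%:R * alpha); exact: arakelov_modular_natr_scale.
Qed.
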